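(* Let $R\subseteq S$ be as in the context, with $q=|R/\mathfrak{m}|$ and $S/\mathfrak{M}=\mathbb{F}_{q^m}$. Let $1\le\ell\le q-1$ and let $\gamma$ be a primitive element of $\mathbb{F}_{q^m}$ (i.e., a generator of $\mathbb{F}_{q^m}^*$). Let $a_1,\ldots,a_\ell\in S^*$ be such that $\overline{a}_i=\gamma^{i-1}$ for $i=1,\ldots,\ell$, where $\overline{a}$ denotes the image of $a$ in $S/\mathfrak{M}$. Then $a_i-a_j^\beta\in S^*$ for all $\beta\in S^*$ and all $1\le i<j\le\ell$.
   Context: $R$ is a finite commutative chain ring with maximal ideal $\mathfrak{m}$, $q=|R/\mathfrak{m}|$; $S=R[x]/(h)$ with $h$ monic of degree $m$ irreducible modulo $\mathfrak{m}$, local with maximal ideal $\mathfrak{M}=\mathfrak{m}S$, unit group $S^*=S\setminus\mathfrak{M}$ and residue field $S/\mathfrak{M}=\mathbb{F}_{q^m}$. $\sigma$ is a ring automorphism of $S$ generating the Galois group of $R\subseteq S$, with fixed ring $R$, reducing modulo $\mathfrak{M}$ to $y\mapsto y^q$. For $a\in S$, $\beta\in S^*$: $a^\beta=\sigma(\beta)a\beta^{-1}$. *)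

From HB Require Import structures.
From mathcomp Require Import all_boot all_order all_algebra all_field.
Set Implicit Arguments. Unset Strict Implicit. Unset Printing Implicit Defensive.
Import GRing.Theory.
Local Open Scope ring_scope.

Definition is_ideal (R : finComUnitRingType) (I : {set R}) : Prop :=
  0 \in I /\ (forall x y, x \in I -> y \in I -> x + y \in I) /\
  (forall r x, x \in I -> r * x \in I).

Definition chain_ring (R : finComUnitRingType) : Prop :=
  forall I J : {set R}, is_ideal I -> is_ideal J -> (I \subset J) \/ (J \subset I).

Definition Ralg_aut (R S : finComUnitRingType) (iota : R -> S) (tau : S -> S) : Prop :=
  [/\ bijective tau, forall x y, tau (x + y) = tau x + tau y,
      forall x y, tau (x * y) = tau x * tau y, tau 1 = 1
    & forall r, tau (iota r) = iota r].

Definition primitive_elt (K : finFieldType) (gamma : K) : Prop :=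
  gamma != 0 /\ forall x : K, x != 0 -> exists k : nat, x = gamma ^+ k.

From mathcomp Require Import all_boot all_order all_algebra all_field all_solvable.

(* Reducing modulo the maximal ideal, [a_i - sigma(beta) a_j beta^-1] is a
   non-unit iff [gamma^i = b^(q-1) gamma^j] in [K], where [b = gamma^t] is the
   residue of [beta]; that is, [i = t(q-1) + j] modulo [|K| - 1].  The nonzero
   residues of [R] are [q - 1] distinct roots of [X^(q-1) - 1] in [K], so
   [q - 1] divides [|K| - 1], whence [i = j] modulo [q - 1]; this is impossible
   for [0 <= i < j < q - 1]. *)
Set Implicit Arguments.
Unset Strict Implicit.
Unset Printing Implicit Defensive.

Import GRing.Theory.
Local Open Scope ring_scope.

Lemma expf_card_pred (F : finFieldType) (x : F) : x != 0 -> x ^+ #|F|.-1 = 1.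
Proof.
move=> x0; apply: (mulfI x0).
by rewrite mulr1 -exprS prednK ?expf_card // ltnW ?finNzRing_gt1.
Qed.

Lemma dvdn_card_unity_roots (F : finFieldType) (n : nat) (rs : seq F) :
  (0 < n)%N -> all n.-unity_root rs -> uniq rs -> size rs = n ->
  (n %| #|F|.-1)%N.
Proof.
move=> n_gt0 rs_roots rs_uniq rs_size.
have /hasP[z _ prim_z] := has_prim_root n_gt0 rs_roots rs_uniq (eq_leq (esym rs_size)).
rewrite (prim_order_dvd prim_z) expf_card_pred //.
apply: contra_eq_neq (prim_expr_order prim_z) => ->.
by rewrite expr0n gtn_eqF // eq_sym oner_eq0.
Qed.

Lemma primitive_elt_prim_root (F : finFieldType) (g : F) :
  primitive_elt g -> (#|F|.-1).-primitive_root g.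
Proof.
case=> g0 gen.
have N_gt0 : (0 < #|F|.-1)%N by rewrite ltn_predRL finNzRing_gt1.
have [m prim_g m_dvd] := prim_order_exists N_gt0 (expf_card_pred g0).
suff -> : #|F|.-1 = m by [].
apply/eqP; rewrite eqn_leq (dvdn_leq N_gt0 m_dvd) andbT.
rewrite -(cardC1 0) cardE.
apply: max_unity_roots (prim_order_gt0 prim_g) _ (enum_uniq _).
apply/allP => x; rewrite mem_enum => /gen[e ->].
by apply/unity_rootP; rewrite -exprM mulnC exprM (prim_expr_order prim_g) expr1n.
Qed.

Section ResidueFields.

Variables (R S : finComUnitRingType) (k K : finFieldType).
Variables (piR : {rmorphism R -> k}) (piS : {rmorphism S -> K}).
Variable iota : {rmorphism R -> S}.

Hypothesis piR_surj : forall y : k, exists r : R, piR r = y.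
Hypothesis piR_eq0 : forall r : R, piR r = 0 <-> r \notin GRing.unit.
Hypothesis piS_eq0 : forall s : S, piS s = 0 <-> s \notin GRing.unit.
Hypothesis piS_iota_frobenius : forall r : R, piS (iota r) ^+ #|k| = piS (iota r).

Lemma piS_iota_eq0 (r : R) : piS (iota r) = 0 -> piR r = 0.
Proof.
move/piS_eq0 => r_nunit; apply/piR_eq0.
by apply: contra r_nunit; apply: rmorph_unit.
Qed.

Lemma dvdn_residue_card : (#|k|.-1 %| #|K|.-1)%N.
Proof.
have lift_spec y : exists r, piR r == y by have [r <-] := piR_surj y; exists r.
pose f y := piS (iota (xchoose (lift_spec y))).
have piR_lift y : piR (xchoose (lift_spec y)) = y := eqP (xchooseP (lift_spec y)).
have f_inj : injective f.
  move=> y z /eqP; rewrite -subr_eq0 -!rmorphB => /eqP /piS_iota_eq0.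
  by rewrite rmorphB !piR_lift => /eqP; rewrite subr_eq0 => /eqP.
have f_neq0 y : y != 0 -> f y != 0.
  by apply: contra_neq => /piS_iota_eq0; rewrite piR_lift.
apply: (@dvdn_card_unity_roots _ _ (map f (enum (predC1 0)))).
- by rewrite ltn_predRL finNzRing_gt1.
- apply/allP => x /mapP[y]; rewrite mem_enum inE => y0 ->.
  apply/unity_rootP; apply: (mulfI (f_neq0 y y0)).
  by rewrite mulr1 -exprS prednK ?piS_iota_frobenius // ltnW ?finNzRing_gt1.
- by rewrite map_inj_uniq ?enum_uniq.
- by rewrite size_map -cardE cardC1.
Qed.

End ResidueFields.

Lemma primitive_twist_expr_inj (K : finFieldType) (gamma b : K) (q i j : nat) :
    primitive_elt gamma -> (q.-1 %| #|K|.-1)%N -> b != 0 ->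
    (i < q.-1)%N -> (j < q.-1)%N ->
  gamma ^+ i * b = b ^+ q * gamma ^+ j -> i = j.
Proof.
move=> prim_gamma dvd_q b0 lt_iq lt_jq E.
have q_gt0 : (0 < q)%N by move: lt_iq; case: (q).
have [t bt] := prim_gamma.2 b b0.
have : gamma ^+ (i + t) == gamma ^+ (t * q + j).
  by rewrite exprD -bt E bt -exprM -exprD.
rewrite (eq_prim_root_expr (primitive_elt_prim_root prim_gamma)).
move=> /eqP /(congr1 (modn^~ q.-1)); rewrite !modn_dvdm //.
rewrite -{2}(prednK q_gt0) mulnSr -addnA modnMDl addnC => /eqP.
by rewrite eqn_modDl !modn_small // => /eqP.
Qed.

Theorem proposition2
  (R : finComUnitRingType) (k : finFieldType) (piR : {rmorphism R -> k})
  (S : finComUnitRingType) (K : finFieldType) (piS : {rmorphism S -> K})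
  (iota : {rmorphism R -> S}) (xi : S) (h : {poly R}) (m : nat)
  (sigma : {rmorphism S -> S})
  (l : nat) (gamma : K) (a : 'I_l -> S) :
  (* R finite commutative chain ring, residue field k = R/m, q = #|k| *)
  chain_ring R ->
  (forall y : k, exists r : R, piR r = y) ->
  (forall r : R, piR r = 0 <-> r \notin GRing.unit) ->
  (* h monic of degree m, irreducible modulo m *)
  h \is monic -> (size h).-1 = m -> irreducible_poly (map_poly piR h) ->
  (* S = R[x]/(h) via p |-> p(xi) *)
  injective iota ->
  (forall s : S, exists p : {poly R}, s = (map_poly iota p).[xi]) ->
  (forall p : {poly R}, (map_poly iota p).[xi] = 0 <-> exists g, p = g * h) ->
  (* residue field K = S/M, M = set of non-units of S *)
  (forall y : K, exists s : S, piS s = y) ->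
  (forall s : S, piS s = 0 <-> s \notin GRing.unit) ->
  (* sigma generates Gal(S/R), fixed ring R, reduces to Frobenius y |-> y^q *)
  Ralg_aut iota sigma ->
  (forall tau : S -> S, Ralg_aut iota tau -> exists n : nat, tau =1 iter n sigma) ->
  (forall s : S, sigma s = s <-> exists r : R, s = iota r) ->
  (forall s : S, piS (sigma s) = piS s ^+ #|k|) ->
  (* hypotheses of the proposition *)
  (1 <= l <= #|k| - 1)%N ->
  primitive_elt gamma ->
  (forall i : 'I_l, a i \is a GRing.unit) ->
  (forall i : 'I_l, piS (a i) = gamma ^+ i) ->
  forall beta : S, beta \is a GRing.unit ->
  forall i j : 'I_l, (i < j)%N ->
    a i - sigma beta * a j * beta^-1 \is a GRing.unit.
Proof.
move=> _ piR_surj piR_eq0 _ _ _ _ _ _ _ piS_eq0 [_ _ _ _ sigma_iota] _ _ piS_sigma.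
move=> /andP[_ l_le] prim_gamma _ a_res beta beta_unit i j lt_ij.
have dvd_q : (#|k|.-1 %| #|K|.-1)%N.
  apply: (dvdn_residue_card (iota := iota) piR_surj piR_eq0 piS_eq0) => r.
  by rewrite -piS_sigma sigma_iota.
have b0 : piS beta != 0 by apply/eqP => /piS_eq0; rewrite beta_unit.
apply/negPn/negP => /piS_eq0/eqP.
rewrite rmorphB !rmorphM (rmorphV _ beta_unit) piS_sigma !a_res subr_eq0 => /eqP E.
rewrite subn1 in l_le.
have lt_q (n : 'I_l) : (n < #|k|.-1)%N := leq_trans (ltn_ord n) l_le.
have /(primitive_twist_expr_inj prim_gamma dvd_q b0 (lt_q i) (lt_q j)) eq_ij :
    gamma ^+ i * piS beta = piS beta ^+ #|k| * gamma ^+ j.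
  by rewrite E mulfVK.
by rewrite eq_ij ltnn in lt_ij.
Qed.
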